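(* Let $k$ be a field and let $A$ be a $k$-algebra with filtration $A_0\subseteq A_1\subseteq\cdots$ (subspaces with $\bigcup_nA_n=A$ and $A_iA_j\subseteq A_{i+j}$). Let $R=\bigoplus_{n\ge0}x^nA_n\subseteq A[x]$ be the Rees algebra, and suppose every element of $R$ is integral over $k[x]$. Then $\operatorname{gr}(A)_{\ge1}=\bigoplus_{n\ge1}A_n/A_{n-1}$ is nil.
   Context: $A$ is associative with unit, $A[x]$ is the polynomial algebra in a central indeterminate $x$. An element $a(x)\in A[x]$ is integral over $k[x]$ if $a(x)^n+p_{n-1}(x)a(x)^{n-1}+\cdots+p_0(x)=0$ for some $n\ge1$ and $p_i(x)\in k[x]$. The associated graded algebra is $\operatorname{gr}(A)=A_0\oplus A_1/A_0\oplus A_2/A_1\oplus\cdots$ with multiplication $(a_p+A_{p-1})(a_q+A_{q-1})=a_pa_q+A_{p+q-1}$ for $a_p\in A_p,a_q\in A_q$ ($A_{-1}=\{0\}$), extended linearly. Nil means every element is nilpotent. *)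

From HB Require Import structures.
From mathcomp Require Import all_boot all_order all_algebra.
Set Implicit Arguments. Unset Strict Implicit. Unset Printing Implicit Defensive.
Import GRing.Theory.
Local Open Scope ring_scope.

Section Filtered.
Variables (k : fieldType) (A : algType k).

Definition is_filtration (F : nat -> {pred A}) : Prop :=
  [/\ (forall n, 0 \in F n),
      (forall n (c : k) u v, u \in F n -> v \in F n -> c *: u + v \in F n),
      (forall n a, a \in F n -> a \in F n.+1),
      (forall a, exists n, a \in F n) &
      (forall i j a b, a \in F i -> b \in F j -> a * b \in F (i + j))].

Definition in_rees (F : nat -> {pred A}) (p : {poly A}) : Prop :=
  forall n, p`_n \in F n.

Definition integral_over_kx (a : {poly A}) : Prop :=
  exists n : nat, (0 < n)%N /\
    exists ps : 'I_n -> {poly k},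
      a ^+ n + \sum_(i < n) map_poly (in_alg A) (ps i) * a ^+ i = 0.

Definition Fprev (F : nat -> {pred A}) (d : nat) : {pred A} :=
  if d is d'.+1 then F d' else pred1 0.

(* Elements of gr(A) are represented by finitely supported families
   c : nat -> A with c d ∈ A_d; the class of c is Σ_d (c d + A_(d-1)). *)
Definition gr_rep (F : nat -> {pred A}) (c : nat -> A) : Prop :=
  (exists N, forall d, (N <= d)%N -> c d = 0) /\ (forall d, c d \in F d).

Definition gr_zero (F : nat -> {pred A}) (c : nat -> A) : Prop :=
  forall d, c d \in Fprev F d.

Definition gr_mul (c e : nat -> A) : nat -> A :=
  fun m => \sum_(i < m.+1) c i * e (m - i)%N.

(* c^(n+1) *)
Definition gr_powS (c : nat -> A) (n : nat) : nat -> A :=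
  iter n (gr_mul c) c.

Definition gr_pos_nil (F : nat -> {pred A}) : Prop :=
  forall c : nat -> A, gr_rep F c -> c 0%N = 0 ->
    exists n : nat, gr_zero F (gr_powS c n).

End Filtered.

From HB Require Import structures.
From mathcomp Require Import all_boot all_order all_algebra.
Set Implicit Arguments. Unset Strict Implicit. Unset Printing Implicit Defensive.
Import GRing.Theory.
Local Open Scope ring_scope.

(* Let c be a positive-degree element of gr(A) and P = sum_d c_d x^d its lift
   to the Rees algebra R.  Since R/xR = gr(A) and x acts as 0 there, an
   integral equation P^n + sum_i p_i(x) P^i = 0, multiplied by P, becomes
   sum_(i <= n) p_i(0) P^(i+1) = 0 in gr(A) with p_n = 1.  If j is the least
   index with p_j(0) <> 0, the equation reads
   P^(j+1) (p_j(0) + terms of positive degree) = 0, and comparing lowest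
   degree components shows P^(j+1) = 0 in gr(A). *)

Lemma coef0_exprS (R : nzRingType) (P : {poly R}) e : P`_0 = 0 -> (P ^+ e.+1)`_0 = 0.
Proof. by move=> P0; rewrite exprS coef0M P0 mul0r. Qed.

Lemma gr_powS_coef (k : fieldType) (A : algType k) (c : nat -> A) (P : {poly A}) :
  (forall d, P`_d = c d) -> forall n m, gr_powS c n m = (P ^+ n.+1)`_m.
Proof.
move=> coefP; elim=> [|n IHn] m; first by rewrite expr1 coefP.
rewrite /gr_powS iterS -/(gr_powS c n) exprS coefM.
by apply: eq_bigr => i _; rewrite coefP IHn.
Qed.

Section ReesAlgebra.
Variables (k : fieldType) (A : algType k) (F : nat -> {pred A}).
Hypothesis filtF : is_filtration F.

Lemma filtration_submod_closed n : submod_closed (F n).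
Proof. by case: filtF => F0 Flin _ _ _; split=> // c u v; apply: Flin. Qed.

HB.instance Definition _ n :=
  GRing.isSubmodClosed.Build k A (F n) (filtration_submod_closed n).

Lemma Fprev_submod_closed m : submod_closed (Fprev F m).
Proof.
case: m => [|m]; last exact: filtration_submod_closed.
by split=> [|c u v]; rewrite /= ?inE // => /eqP-> /eqP->; rewrite scaler0 addr0.
Qed.

HB.instance Definition _ m :=
  GRing.isSubmodClosed.Build k A (Fprev F m) (Fprev_submod_closed m).

Lemma filtration_le i j a : (i <= j)%N -> a \in F i -> a \in F j.
Proof.
case: filtF => _ _ FS _ _ /subnK <-; elim: (j - i)%N => // d IHd ai.
by rewrite addSn; apply/FS/IHd.
Qed.

Lemma filtrationM i j a b : a \in F i -> b \in F j -> a * b \in F (i + j).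
Proof. by case: filtF => _ _ _ _; apply. Qed.

Lemma FprevM i j a b : a \in Fprev F i -> b \in F j -> a * b \in Fprev F (i + j).
Proof.
case: i => [|i] /=; last exact: filtrationM.
by rewrite inE => /eqP-> _; rewrite mul0r rpred0.
Qed.

Lemma rees_mul (Q S : {poly A}) : in_rees F Q -> in_rees F S -> in_rees F (Q * S).
Proof.
move=> reesQ reesS m; rewrite coefM rpred_sum // => i _.
by have := filtrationM (reesQ i) (reesS (m - i)%N); rewrite subnKC // -ltnS.
Qed.

Lemma rees_exprS (P : {poly A}) : in_rees F P -> forall e, in_rees F (P ^+ e.+1).
Proof.
move=> reesP; elim=> [|e IHe]; first by rewrite expr1.
by rewrite exprS; apply: rees_mul.
Qed.

(* [xrees] is the ideal xR of the Rees algebra R, so that R/xR = gr(A). *)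
Local Notation xrees := (in_rees (Fprev F)).

Lemma kx_mul_rees_modx (q : {poly k}) (Q : {poly A}) :
  in_rees F Q -> xrees (map_poly (in_alg A) q * Q - (q`_0)%:A *: Q).
Proof.
move=> reesQ m; rewrite coefB coefZ coefM big_ord_recl coef_map /= subn0.
rewrite addrAC subrr add0r.
case: m => [|m]; first by rewrite big_ord0 rpred0.
rewrite rpred_sum // => i _; rewrite coef_map /= mulr_algl rpredZ //.
by apply: filtration_le (reesQ _); rewrite /bump /= subSS leq_subr.
Qed.

Lemma xrees_coefM (Q S : {poly A}) m :
    (forall l, (l < m)%N -> Q`_l \in Fprev F l) -> in_rees F S -> S`_0 = 0 ->
  (Q * S)`_m \in Fprev F m.
Proof.
move=> lowQ reesS S0; rewrite coefM big_ord_recr /= subnn S0 mulr0 addr0.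
rewrite rpred_sum // => i _.
by have := FprevM (lowQ i (ltn_ord i)) (reesS (m - i)%N); rewrite subnKC // ltnW.
Qed.

Variables (P : {poly A}) (reesP : in_rees F P) (P0 : P`_0 = 0).

Lemma xrees_lowest_pow n (b : nat -> k) j :
    (j <= n)%N -> b j != 0 -> (forall i, (i < j)%N -> b i = 0) ->
    xrees (\sum_(i < n.+1) (b i)%:A *: P ^+ i.+1) ->
  xrees (P ^+ j.+1).
Proof.
move=> le_jn bj0 bj_min rel m; elim/ltn_ind: m => m IHm.
move: (rel m); rewrite coef_sum (bigD1 (Ordinal (le_jn : (j < n.+1)%N))) //=.
rewrite coefZ mulr_algl.
set higher := \sum_(i | _) _ => rel_m.
have higher_low : higher \in Fprev F m.
  rewrite rpred_sum // => i /= neq_ij; rewrite coefZ mulr_algl.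
  case: (ltngtP i j) => [lt_ij | lt_ji | eq_ij].
  - by rewrite bj_min // scale0r rpred0.
  - rewrite rpredZ // -(subnKC lt_ji) -addnS exprD.
    by apply: xrees_coefM IHm (rees_exprS reesP _) (coef0_exprS _ P0).
  - by move: neq_ij; rewrite -val_eqE /= eq_ij eqxx.
have : b j *: (P ^+ j.+1)`_m \in Fprev F m.
  by rewrite -(addrK higher (b j *: _)) rpredB.
by move/(rpredZ (b j)^-1); rewrite scalerA mulVf // scale1r.
Qed.

Lemma xrees_pow_of_relation n (b : nat -> k) :
    b n != 0 -> xrees (\sum_(i < n.+1) (b i)%:A *: P ^+ i.+1) ->
  exists j, xrees (P ^+ j.+1).
Proof.
move=> bn0 rel.
have [j bj0 bj_min] := @ex_minnP (fun i => b i != 0) (ex_intro _ n bn0).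
exists j; apply: xrees_lowest_pow bj0 _ rel; first exact: bj_min.
by move=> i lt_ij; apply/eqP; apply: contraTT lt_ij => /bj_min; rewrite -leqNgt.
Qed.

Lemma integral_xrees_relation : integral_over_kx P ->
  exists n (b : nat -> k), b n != 0 /\ xrees (\sum_(i < n.+1) (b i)%:A *: P ^+ i.+1).
Proof.
move=> [n [_ [ps hps]]].
pose b i := oapp (fun i' : 'I_n => (ps i')`_0) 1 (insub i).
exists n, b; split; first by rewrite /b insubN ?ltnn ?oner_neq0.
have relP : P ^+ n.+1 + \sum_(i < n) map_poly (in_alg A) (ps i) * P ^+ i.+1 = 0.
  rewrite exprSr (eq_bigr (fun i : 'I_n => map_poly (in_alg A) (ps i) * P ^+ i * P)).
    by rewrite -mulr_suml -mulrDl hps mul0r.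
  by move=> i _; rewrite exprSr mulrA.
rewrite big_ord_recr /= {2}/b insubN ?ltnn //= !scale1r addrC.
under eq_bigr => i _ do rewrite /b /= valK /=.
have -> : P ^+ n.+1 + \sum_(i < n) ((ps i)`_0)%:A *: P ^+ i.+1 =
    - \sum_(i < n) (map_poly (in_alg A) (ps i) * P ^+ i.+1 - ((ps i)`_0)%:A *: P ^+ i.+1).
  have mapE : \sum_(i < n) map_poly (in_alg A) (ps i) * P ^+ i.+1 = - P ^+ n.+1.
    by apply/eqP; rewrite -addr_eq0 addrC relP.
  by rewrite sumrB opprB mapE opprK addrC.
move=> m; rewrite coefN coef_sum rpredN rpred_sum // => i _.
exact: kx_mul_rees_modx (rees_exprS reesP i) m.
Qed.

End ReesAlgebra.

Theorem corollary5p3 (k : fieldType) (A : algType k) (F : nat -> {pred A}) :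
  is_filtration F ->
  (forall p : {poly A}, in_rees F p -> integral_over_kx p) ->
  gr_pos_nil F.
Proof.
move=> filtF integral c [[N c_eq0] c_filt] c0.
pose P : {poly A} := \poly_(d < N) c d.
have coefP d : P`_d = c d by rewrite coef_poly; case: ltnP => // /c_eq0->.
have reesP : in_rees F P by move=> d; rewrite coefP; apply: c_filt.
have P0 : P`_0 = 0 by rewrite coefP.
have [n [b [bn0 rel]]] := integral_xrees_relation filtF reesP (integral P reesP).
have [j powP] := xrees_pow_of_relation filtF reesP P0 bn0 rel.
by exists j => m; rewrite (gr_powS_coef coefP).
Qed.
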